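(* Let $X_1,\dots,X_n$ be i.i.d. $\mathsf{Bernoulli}(p)$ with $p\in[\frac12,1)$, and let $Y_k=X_k\oplus V_k$ for $k=1,\dots,n$, where $V_1,\dots,V_n$ are i.i.d. $\mathsf{Bernoulli}(\alpha)$, independent of $X^n$, with $\alpha\in[0,\frac12)$ and $\bar\alpha>p$. Let $q=\alpha\bar p+\bar\alpha p$ and $\zeta(\varepsilon)=\frac{\bar\alpha\bar p+\bar\alpha p-\varepsilon}{\bar\alpha p-\alpha\bar p}$. Then for all $\varepsilon\in[p,\bar\alpha]$, $$\mathcal{h}^{\mathsf i}_n(\varepsilon)=1-\zeta(\varepsilon)q.$$
   Context: $\bar a=1-a$; $\oplus$ is addition mod 2. $\mathsf{P}_{\mathsf{c}}(X^n|Z^n)=\sum_{z^n}\max_{x^n}P_{X^nZ^n}(x^n,z^n)$. $\mathcal{h}^{\mathsf i}_n(\varepsilon)=\sup\mathsf{P}_{\mathsf{c}}^{1/n}(Y^n|Z^n)$, where the supremum is over all memoryless privacy filters of the form $P_{Z^n|Y^n}(z^n|y^n)=\prod_{k=1}^n\mathsf{W}(z_k|y_k)$ for $y^n,z^n\in\{0,1\}^n$, with $\mathsf{W}$ a single channel from $\{0,1\}$ to $\{0,1\}$ (with $Z^n$ generated from $Y^n$ only, so $X^n - Y^n - Z^n$), satisfying $\mathsf{P}_{\mathsf{c}}^{1/n}(X^n|Z^n)\le\varepsilon$. *)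

From HB Require Import structures.
From mathcomp Require Import all_boot all_order all_algebra.
From mathcomp Require Import all_classical all_reals exp.
Set Implicit Arguments. Unset Strict Implicit. Unset Printing Implicit Defensive.
Import Order.TTheory GRing.Theory Num.Theory.
Local Open Scope ring_scope.
Local Open Scope classical_set_scope.

Section Defs.
Variable R : realType.

Definition bern (p : R) (b : bool) : R := if b then p else 1 - p.

(* A binary channel W, written W y z = W(z|y), is a stochastic matrix. *)
Definition channel (W : bool -> bool -> R) : Prop :=
  forall y, (forall z, 0 <= W y z) /\ W y false + W y true = 1.

Notation seqn n := {ffun 'I_n -> bool}.

(* Joint pmf P_{X^n Y^n Z^n}(x,y,z): X_k iid Bern(p), Y_k = X_k (+) V_k with
   V_k iid Bern(alpha) independent of X^n, and Z^n from Y^n through the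
   memoryless filter prod_k W(z_k|y_k). *)
Definition jointP (n : nat) (p alpha : R) (W : bool -> bool -> R)
  (x y z : seqn n) : R :=
  \prod_(k < n) (bern p (x k) * bern alpha (addb (x k) (y k)) * W (y k) (z k)).

Definition PcX (n : nat) (p alpha : R) W : R :=
  \sum_(z : seqn n) \big[Num.max/0]_(x : seqn n)
      \sum_(y : seqn n) jointP p alpha W x y z.

Definition PcY (n : nat) (p alpha : R) W : R :=
  \sum_(z : seqn n) \big[Num.max/0]_(y : seqn n)
      \sum_(x : seqn n) jointP p alpha W x y z.

Definition h_i (n : nat) (p alpha eps : R) : R :=
  sup [set r | exists W, channel W /\
        powR (PcX n p alpha W) (n%:R^-1) <= eps /\
        r = powR (PcY n p alpha W) (n%:R^-1)].

End Defs.

From HB Require Import structures.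
From mathcomp Require Import all_boot all_order all_algebra.
From mathcomp Require Import all_classical all_reals exp.
From mathcomp Require Import ring lra.
Set Implicit Arguments. Unset Strict Implicit. Unset Printing Implicit Defensive.
Import Order.TTheory GRing.Theory Num.Theory.
Local Open Scope ring_scope.

(* For a memoryless filter both correct-guessing probabilities tensorize:
   P_c(X^n|Z^n) and P_c(Y^n|Z^n) are the n-th powers of their single-letter
   values, so everything reduces to one binary channel W.  Comparing, for
   each output letter z, the MAP guesses of X and of Y from Z = z and summing
   over z gives the tradeoff  q (1 - alpha - P_c(X|Z)) <= (p - alpha) (1 - P_c(Y|Z)),
   hence P_c(Y|Z) <= 1 - zeta q as soon as P_c(X|Z) <= eps.  The Z-channel
   flipping 1 to 0 with probability zeta attains both bounds with equality. *)

Section GuessProb.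
Variable R : realType.

Definition guess_prob (A B C : finType) (F : A -> B -> C -> R) : R :=
  \sum_(c : C) \big[Num.max/0]_(a : A) \sum_(b : B) F a b c.

Lemma guess_prob_ge0 (A B C : finType) (F : A -> B -> C -> R) :
  (forall a b c, 0 <= F a b c) -> 0 <= guess_prob F.
Proof. by move=> F_ge0; apply: sumr_ge0 => c _; exact: bigmax_ge_id. Qed.

Lemma bigmax_prod_ffun (I A : finType) (a0 : A) (G : I -> A -> R) :
    (forall i a, 0 <= G i a) ->
  \big[Num.max/0]_(f : {ffun I -> A}) \prod_i G i (f i)
    = \prod_i \big[Num.max/0]_(a : A) G i a.
Proof.
move=> G_ge0; apply/le_anti/andP; split.
  apply: bigmax_le => [|f _]; first by apply: prodr_ge0 => i _; exact: bigmax_ge_id.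
  by apply: ler_prod => i _; rewrite G_ge0 le_bigmax.
have argmax i := @eq_bigmax _ _ _ 0 a0 predT (G i) isT (fun a _ => G_ge0 i a).
pose f := [ffun i => s2val (argmax i)].
rewrite (_ : \prod_i _ = \prod_i G i (f i)) ?le_bigmax //.
by apply: eq_bigr => i _; rewrite ffunE; case: (argmax i).
Qed.

Lemma guess_prob_ffun (I A B C : finType) (a0 : A) (F : A -> B -> C -> R) :
    (forall a b c, 0 <= F a b c) ->
  guess_prob (fun (a : {ffun I -> A}) (b : {ffun I -> B}) (c : {ffun I -> C}) =>
                \prod_i F (a i) (b i) (c i))
    = guess_prob F ^+ #|I|.
Proof.
move=> F_ge0; transitivity (\prod_(i : I) guess_prob F); last exact: prodr_const.
rewrite /guess_prob bigA_distr_bigA /=; apply: eq_bigr => c _.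
under eq_bigr => a _ do rewrite -(bigA_distr_bigA (fun i b => F (a i) b (c i))).
by apply: bigmax_prod_ffun => // i a; apply: sumr_ge0.
Qed.

Lemma exprnK_powR (x : R) n : (0 < n)%N -> 0 <= x -> powR (x ^+ n) n%:R^-1 = x.
Proof.
move=> n_gt0 x_ge0; rewrite -powR_mulrn // -powRrM mulfV ?powRr1 //.
by rewrite pnatr_eq0 -lt0n.
Qed.

Lemma guess_prob_ffun_root n (A B C : finType) (a0 : A) (F : A -> B -> C -> R) :
    (0 < n)%N -> (forall a b c, 0 <= F a b c) ->
  powR (guess_prob (fun (a : {ffun 'I_n -> A}) (b : {ffun 'I_n -> B})
                        (c : {ffun 'I_n -> C}) => \prod_k F (a k) (b k) (c k)))
       n%:R^-1
    = guess_prob F.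
Proof.
move=> n_gt0 F_ge0.
by rewrite (guess_prob_ffun _ a0) // card_ord exprnK_powR // guess_prob_ge0.
Qed.

Lemma bigmax_bool (F : bool -> R) : (forall b, 0 <= F b) ->
  \big[Num.max/0]_(b : bool) F b = Num.max (F true) (F false).
Proof. by move=> F_ge0; rewrite /index_enum !unlock /= (@max_l _ _ (F false) 0). Qed.

Lemma guess_prob_bool (F : bool -> bool -> bool -> R) :
    (forall a b c, 0 <= F a b c) ->
  guess_prob F =
    Num.max (F true true true + F true false true)
            (F false true true + F false false true)
  + Num.max (F true true false + F true false false)
            (F false true false + F false false false).
Proof.
move=> F_ge0; have sum_ge0 c a : 0 <= \sum_b F a b c by exact: sumr_ge0.
by rewrite /guess_prob big_bool !(bigmax_bool (sum_ge0 _)) !big_bool.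
Qed.

Lemma sup_greatest (E : set R) x : E x -> ubound E x -> sup E = x.
Proof.
move=> Ex ubx; apply/le_anti/andP; split; first by apply: ge_sup => //; exists x.
by apply: sup_upper_bound => //; split; exists x.
Qed.

End GuessProb.

Section BinaryFilter.
Variable R : realType.

Lemma bern_ge0 (r : R) b : 0 <= r -> r <= 1 -> 0 <= bern r b.
Proof. by case: b => /= *; lra. Qed.

Definition bconv (p alpha : R) := alpha * (1 - p) + (1 - alpha) * p.

Lemma bconv_ge0 p alpha : 0 <= p -> p <= 1 -> 0 <= alpha -> alpha <= 1 ->
  0 <= bconv p alpha.
Proof. by move=> *; rewrite /bconv; nra. Qed.

Lemma bconv_gap p alpha : 2^-1 <= p -> 0 <= alpha -> alpha <= 1 ->
  bconv p alpha * (1 - alpha - p) <= (p - alpha) * (1 - bconv p alpha).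
Proof.
move=> p_ge_half alpha_ge0 alpha_le1.
have : 0 <= 2 * alpha * (1 - alpha) * (2 * p - 1) by rewrite !mulr_ge0 //; lra.
by rewrite /bconv; lra.
Qed.

(* (c1, c0) = (W(z|1), W(z|0)) is one output column of the filter: the
   terms without a max are the share of 1 - alpha and of 1 carried by z. *)
Lemma column_tradeoff (p alpha c1 c0 : R) : 2^-1 <= p -> p <= 1 ->
    0 <= alpha -> alpha <= 1 -> 0 <= c1 -> 0 <= c0 ->
  bconv p alpha * ((1 - alpha) * (p * c1 + (1 - p) * c0)
       - Num.max (p * ((1 - alpha) * c1 + alpha * c0))
                 ((1 - p) * (alpha * c1 + (1 - alpha) * c0)))
    <= (p - alpha) * (bconv p alpha * c1 + (1 - bconv p alpha) * c0
                      - Num.max (bconv p alpha * c1) ((1 - bconv p alpha) * c0)).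
Proof.
move=> p_ge_half p_le1 alpha_ge0 alpha_le1 c1_ge0 c0_ge0.
have q_ge0 : 0 <= bconv p alpha by apply: bconv_ge0 => //; lra.
set q := bconv p alpha; set MX := Num.max (p * _) _.
have [qXp qXq] : q * (p * ((1 - alpha) * c1 + alpha * c0)) <= q * MX
              /\ q * ((1 - p) * (alpha * c1 + (1 - alpha) * c0)) <= q * MX.
  by split; rewrite ler_wpM2l // le_max lexx ?orbT.
have [Y_c1|Y_c0] := leP ((1 - q) * c0) (q * c1).
- have := ler_wpM2l c0_ge0 (bconv_gap p_ge_half alpha_ge0 alpha_le1).
  rewrite /q /bconv in qXp *; lra.
- rewrite /q /bconv in qXq *; lra.
Qed.

Section Letter.
Variables (p alpha : R) (W : bool -> bool -> R).

Definition letter_pmf x y z := bern p x * bern alpha (x (+) y) * W y z.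

Hypotheses (p_ge0 : 0 <= p) (p_le1 : p <= 1) (alpha_ge0 : 0 <= alpha)
  (alpha_le1 : alpha <= 1) (chW : channel W).

Lemma letter_pmf_ge0 x y z : 0 <= letter_pmf x y z.
Proof. by rewrite !mulr_ge0 ?bern_ge0 //; case: (chW y) => ->. Qed.

Lemma PcX_letter n : (0 < n)%N ->
  powR (PcX n p alpha W) n%:R^-1 = guess_prob letter_pmf.
Proof. by move=> n_gt0; apply: guess_prob_ffun_root false _ n_gt0 letter_pmf_ge0. Qed.

Lemma PcY_letter n : (0 < n)%N ->
  powR (PcY n p alpha W) n%:R^-1 = guess_prob (fun y x z => letter_pmf x y z).
Proof.
by move=> n_gt0; apply: guess_prob_ffun_root false _ n_gt0 _ => *; exact: letter_pmf_ge0.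
Qed.

Lemma guessX_letter : guess_prob letter_pmf =
    Num.max (p * ((1 - alpha) * W true true + alpha * W false true))
            ((1 - p) * (alpha * W true true + (1 - alpha) * W false true))
  + Num.max (p * ((1 - alpha) * W true false + alpha * W false false))
            ((1 - p) * (alpha * W true false + (1 - alpha) * W false false)).
Proof.
rewrite guess_prob_bool; last exact: letter_pmf_ge0.
by rewrite /letter_pmf /=; congr (Num.max _ _ + Num.max _ _); ring.
Qed.

Lemma guessY_letter : guess_prob (fun y x z => letter_pmf x y z) =
    Num.max (bconv p alpha * W true true) ((1 - bconv p alpha) * W false true)
  + Num.max (bconv p alpha * W true false) ((1 - bconv p alpha) * W false false).
Proof.
rewrite guess_prob_bool => [|*]; last exact: letter_pmf_ge0.
by rewrite /letter_pmf /bconv /=; congr (Num.max _ _ + Num.max _ _); ring.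
Qed.

Lemma guess_letter_tradeoff : 2^-1 <= p ->
  bconv p alpha * (1 - alpha - guess_prob letter_pmf)
    <= (p - alpha) * (1 - guess_prob (fun y x z => letter_pmf x y z)).
Proof.
move=> p_ge_half; rewrite guessX_letter guessY_letter.
have [[W1_ge0 W1_sum] [W0_ge0 W0_sum]] := (chW true, chW false).
have col z := column_tradeoff p_ge_half p_le1 alpha_ge0 alpha_le1 (W1_ge0 z) (W0_ge0 z).
have [col1 col0] := (col true, col false).
have W10 : W true false = 1 - W true true by lra.
have W00 : W false false = 1 - W false true by lra.
rewrite W10 W00 in col0 *; lra.
Qed.

Lemma guessY_letter_le eps zeta : 2^-1 <= p -> alpha < p ->
    zeta * (p - alpha) = 1 - alpha - eps -> guess_prob letter_pmf <= eps ->
  guess_prob (fun y x z => letter_pmf x y z) <= 1 - zeta * bconv p alpha.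
Proof.
move=> p_ge_half alpha_lt_p zetaE X_le_eps.
have tradeoff := guess_letter_tradeoff p_ge_half.
have q_ge0 := bconv_ge0 p_ge0 p_le1 alpha_ge0 alpha_le1.
have privacy : bconv p alpha * (1 - alpha - eps)
                 <= bconv p alpha * (1 - alpha - guess_prob letter_pmf).
  by rewrite ler_wpM2l // lerB.
have zetaEq : zeta * bconv p alpha * (p - alpha) = bconv p alpha * (1 - alpha - eps).
  by rewrite -zetaE; ring.
by rewrite -(ler_pM2l (_ : 0 < p - alpha)) ?subr_gt0 //; lra.
Qed.

End Letter.

Definition zchannel (s : R) (y : bool) : bool -> R := bern (if y then 1 - s else 0).

Lemma zchannel_channel s : 0 <= s -> s <= 1 -> channel (zchannel s).
Proof. by move=> s_ge0 s_le1; case; split=> [[]|] /=; lra. Qed.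

Lemma guessX_zchannel p alpha s : 0 <= p -> p <= 1 -> 0 <= alpha -> alpha <= 1 ->
    0 <= s -> s <= 1 -> alpha <= p -> s * (p - alpha) <= 1 - alpha - p ->
  guess_prob (letter_pmf p alpha (zchannel s)) = 1 - alpha - s * (p - alpha).
Proof.
move=> p_ge0 p_le1 alpha_ge0 alpha_le1 s_ge0 s_le1 alpha_le_p s_small.
have chW := zchannel_channel s_ge0 s_le1.
rewrite guessX_letter //= max_l; last by nra.
by rewrite max_r; [ring | nra].
Qed.

Lemma guessY_zchannel p alpha s : 0 <= p -> p <= 1 -> 0 <= alpha -> alpha <= 1 ->
    0 <= s -> s <= 1 -> s * bconv p alpha <= 1 - bconv p alpha ->
  guess_prob (fun y x z => letter_pmf p alpha (zchannel s) x y z)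
    = 1 - s * bconv p alpha.
Proof.
move=> p_ge0 p_le1 alpha_ge0 alpha_le1 s_ge0 s_le1 s_small.
have q_ge0 := bconv_ge0 p_ge0 p_le1 alpha_ge0 alpha_le1.
have chW := zchannel_channel s_ge0 s_le1.
rewrite guessY_letter //= max_l; last by nra.
by rewrite max_r; [ring | nra].
Qed.

End BinaryFilter.

Theorem proposition2 (R : realType) (n : nat) (p alpha eps : R) :
  (0 < n)%N ->
  2^-1 <= p -> p < 1 ->
  0 <= alpha -> alpha < 2^-1 -> p < 1 - alpha ->
  p <= eps -> eps <= 1 - alpha ->
  let q := alpha * (1 - p) + (1 - alpha) * p in
  let zeta := ((1 - alpha) * (1 - p) + (1 - alpha) * p - eps) /
              ((1 - alpha) * p - alpha * (1 - p)) in
  h_i n p alpha eps = 1 - zeta * q.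
Proof.
move=> n_gt0 p_ge_half p_lt1 alpha_ge0 alpha_lt_half _ p_le_eps eps_le q zeta.
have [alpha_lt_p alpha_le1 p_ge0 p_le1] : [/\ alpha < p, alpha <= 1, 0 <= p & p <= 1].
  by split; lra.
have zetaE : zeta * (p - alpha) = 1 - alpha - eps.
  rewrite /zeta; have -> : (1 - alpha) * p - alpha * (1 - p) = p - alpha by ring.
  by rewrite divfK ?subr_eq0 ?gt_eqF //; ring.
rewrite /q -/(bconv p alpha); clearbody zeta.
have gap := bconv_gap p_ge_half alpha_ge0 alpha_le1.
have q_ge0 := bconv_ge0 p_ge0 p_le1 alpha_ge0 alpha_le1.
have [zeta_ge0 zeta_le1 zeta_q] :
    [/\ 0 <= zeta, zeta <= 1 & zeta * bconv p alpha <= 1 - bconv p alpha].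
  by split; nra.
rewrite /h_i; apply: sup_greatest.
- have chZ := zchannel_channel zeta_ge0 zeta_le1.
  exists (zchannel zeta); rewrite PcX_letter ?PcY_letter //; split=> //; split.
    by rewrite guessX_zchannel //; lra.
  by symmetry; apply: guessY_zchannel.
- move=> _ [W [chW [PcX_le ->]]]; rewrite PcX_letter // in PcX_le.
  by rewrite PcY_letter //; apply: guessY_letter_le zetaE PcX_le.
Qed.
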